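(* Let $A$ be a non-empty set and let $f\in H_0[\ell_1(A)]_+$ be maximal. Then: (i) $f(x^* )\le f(y^* )$ whenever $x^*,y^*\in\ell_\infty(A)$ satisfy $|x^*|\le|y^*|$; (ii) $\sum_{k=1}^n f(x_k^* )\le f(\sum_{k=1}^n x_k^* )$ for every $n\in\mathbb N$ and $x_1^*,\dots,x_n^*\in\ell_\infty(A)_+$; (iii) $\|f\|_{FBL[\ell_1(A)]}=\|f\|_\infty$, where $\|f\|_\infty=\sup\{|f(x^* )|:x^*\in B_{\ell_\infty(A)}\}$.
   Context: Identify $\ell_1(A)^*$ with $\ell_\infty(A)$. $H[\ell_1(A)]$ is the vector space of positively homogeneous functions $f:\ell_\infty(A)\to\mathbb R$ ($f(\lambda x^* )=\lambda f(x^* )$ for $\lambda>0$), ordered pointwise. For $f\in H[\ell_1(A)]$, $\|f\|_{FBL[\ell_1(A)]}:=\sup\{\sum_{k=1}^n|f(x_k^* )| : n\in\mathbb N,\ x_1^*,\dots,x_n^*\in\ell_\infty(A),\ \sup_{a\in A}\sum_{k=1}^n|x_k^*(a)|\le1\}$, and $H_0[\ell_1(A)]=\{f:\|f\|_{FBL[\ell_1(A)]}<\infty\}$, with positive cone $H_0[\ell_1(A)]_+$. An element $f\in H_0[\ell_1(A)]_+$ is maximal if the only $g\in H_0[\ell_1(A)]_+$ with $g\ge f$ and $\|g\|_{FBL[\ell_1(A)]}=\|f\|_{FBL[\ell_1(A)]}$ is $g=f$. *)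

From HB Require Import structures.
From mathcomp Require Import all_boot all_order all_algebra.
From mathcomp Require Import all_classical all_reals ereal Rstruct.
From Stdlib Require Import Rdefinitions.
Set Implicit Arguments. Unset Strict Implicit. Unset Printing Implicit Defensive.
Import Order.TTheory GRing.Theory Num.Theory.
Local Open Scope ring_scope.

(* ell_infty(A) = ell_1(A)^* : bounded real functions on A *)
Record linf (A : Type) := Linf {
  lval :> A -> R;
  lbd : exists M : R, forall a, `|lval a| <= M }.

Lemma linf_scale_bd (A : Type) (l : R) (x : linf A) :
  exists M : R, forall a, `|l * x a| <= M.
Proof.
case: (lbd x) => M HM; exists (`|l| * M) => a.
by rewrite normrM ler_wpM2l.
Qed.

Definition linf_scale (A : Type) (l : R) (x : linf A) : linf A :=
  Linf (linf_scale_bd l x).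

Lemma linf_sum_bd (A : Type) (xs : seq (linf A)) :
  exists M : R, forall a, `|\sum_(x <- xs) x a| <= M.
Proof.
elim: xs => [|x xs [M HM]].
  by exists 0 => a; rewrite big_nil normr0.
case: (lbd x) => N HN; exists (N + M) => a.
rewrite big_cons; apply: le_trans (ler_normD _ _) _.
exact: lerD.
Qed.

Definition linf_sum (A : Type) (xs : seq (linf A)) : linf A :=
  Linf (linf_sum_bd xs).

(* H[ell_1(A)]: positively homogeneous functions on ell_infty(A) *)
Definition pos_homogeneous (A : Type) (f : linf A -> R) : Prop :=
  forall (l : R) (x : linf A), 0 < l -> f (linf_scale l x) = l * f x.

Definition fbl_norm (A : Type) (f : linf A -> R) : \bar R :=
  ereal_sup [set ((\sum_(x <- xs) `|f x|)%R)%:E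
            | xs in [set xs : seq (linf A) |
                     forall a, (\sum_(x <- xs) `|x a|) <= 1]].

Definition sup_norm (A : Type) (f : linf A -> R) : \bar R :=
  ereal_sup [set `|f x|%:E | x in [set x : linf A | forall a, `|x a| <= 1]].

Definition H0_pos (A : Type) (f : linf A -> R) : Prop :=
  [/\ pos_homogeneous f, (fbl_norm f < +oo)%E & forall x, 0 <= f x].

Definition maximal (A : Type) (f : linf A -> R) : Prop :=
  H0_pos f /\
  forall g : linf A -> R, H0_pos g -> (forall x, f x <= g x) ->
    fbl_norm g = fbl_norm f -> g = f.

(* Let f be maximal and let z_1, ..., z_n be dominated by x_0, i.e.
   sum_k |z_k| <= |x_0| pointwise.  If sum_k f(z_k) exceeded f(x_0), then
   raising f on the open ray through x_0 to the values lambda * sum_k f(z_k)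
   would give a larger positively homogeneous function with the same FBL norm:
   in any admissible family, an element lambda * x_0 of the ray may be
   replaced by lambda z_1, ..., lambda z_n without breaking admissibility.
   This contradicts maximality, so sum_k f(z_k) <= f(x_0).  The three claims
   are instances: (i) with n = 1, (ii) with x_0 = sum_k x_k, and (iii) with
   x_0 = sum_k |x_k|, which lies in the unit ball of l_infty(A) whenever the
   family is admissible. *)
From mathcomp Require Import all_boot all_order all_algebra.
From mathcomp Require Import all_classical all_reals ereal Rstruct.
From Stdlib Require Import Rdefinitions.
Import Order.TTheory GRing.Theory Num.Theory.
Local Open Scope ring_scope.

Lemma linf_ext {A : Type} (x y : linf A) : (forall a, x a = y a) -> x = y.
Proof.
case: x y => [x x_bd] [y y_bd] /= /funext eq_xy; subst y.
by rewrite (Prop_irrelevance x_bd y_bd).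
Qed.

Lemma linf_abs_bd {A : Type} (x : linf A) : exists M : R, forall a, `| `|x a| | <= M.
Proof. by case: (lbd x) => M x_le; exists M => a; rewrite normr_id. Qed.

Definition linf_abs {A : Type} (x : linf A) : linf A := Linf (linf_abs_bd x).

Lemma fbl_norm_ub {A : Type} (f : linf A -> R) (xs : seq (linf A)) :
  (forall a, \sum_(x <- xs) `|x a| <= 1) ->
  ((\sum_(x <- xs) `|f x|)%:E <= fbl_norm f)%E.
Proof. by move=> xs_adm; apply: ereal_sup_ubound; exists xs. Qed.

Lemma fbl_norm_le {A : Type} (f g : linf A -> R) :
  (forall x, `|f x| <= `|g x|) -> (fbl_norm f <= fbl_norm g)%E.
Proof.
move=> le_fg; apply: ge_ereal_sup => _ [xs xs_adm <-].
apply: le_trans (fbl_norm_ub g xs xs_adm).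
by rewrite lee_fin; apply: ler_sum.
Qed.

Lemma sup_norm_le_fbl_norm {A : Type} (f : linf A -> R) :
  (sup_norm f <= fbl_norm f)%E.
Proof.
apply: ge_ereal_sup => _ [x x_ball <-].
apply: le_trans (fbl_norm_ub f [:: x] _); first by rewrite big_seq1.
by move=> a; rewrite big_seq1.
Qed.

Lemma pos_homogeneous_null {A : Type} (f : linf A -> R) (x : linf A) :
  pos_homogeneous f -> (forall a, x a = 0) -> f x = 0.
Proof.
move=> f_hom x_null; have x2 : linf_scale 2 x = x.
  by apply: linf_ext => a /=; rewrite x_null mulr0.
have := f_hom 2 x (ltr0Sn _ 1); rewrite x2 mulr2n mulrDl mul1r => fx_double.
by apply: (addrI (f x)); rewrite addr0 -fx_double.
Qed.

Lemma pos_homogeneous_sum_null {A : Type} (f : linf A -> R) (zs : seq (linf A)) :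
  pos_homogeneous f -> (forall a, \sum_(z <- zs) `|z a| <= 0) ->
  \sum_(z <- zs) f z = 0.
Proof.
move=> f_hom; elim: zs => [|z zs IH] zs_null; first by rewrite big_nil.
have sum_eq0 a : (`|z a| == 0) && (\sum_(y <- zs) `|y a| == 0).
  rewrite -paddr_eq0 ?sumr_ge0 // eq_le addr_ge0 ?sumr_ge0 // andbT.
  by have := zs_null a; rewrite big_cons.
rewrite big_cons IH ?pos_homogeneous_null ?addr0 // => a.
  by have /andP[/eqP/normr0_eq0] := sum_eq0 a.
by have /andP[_ /eqP->] := sum_eq0 a.
Qed.

Section RayLift.
Context {A : Type}.
Variables (f : linf A -> R) (x0 : linf A) (a0 : A) (zs : seq (linf A)).
Hypotheses (f_hom : pos_homogeneous f) (f_ge0 : forall x, 0 <= f x).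
Hypothesis x0a0_neq0 : x0 a0 != 0.

Definition on_ray (x : linf A) : Prop :=
  exists2 l : R, 0 < l & forall a, x a = l * x0 a.

Definition ray_coef (x : linf A) := x a0 / x0 a0.

Definition ray_lift (x : linf A) :=
  if `[< on_ray x >] then ray_coef x * \sum_(z <- zs) f z else f x.

Lemma ray_coefE {x : linf A} {l : R} :
  (forall a, x a = l * x0 a) -> ray_coef x = l.
Proof. by move=> xE; rewrite /ray_coef xE mulfK. Qed.

Lemma on_rayE {x : linf A} :
  on_ray x -> 0 < ray_coef x /\ x = linf_scale (ray_coef x) x0.
Proof.
case=> l l_gt0 xE; rewrite (ray_coefE xE); split => //.
exact: linf_ext.
Qed.

Lemma on_ray_scale {l : R} {x : linf A} :
  0 < l -> on_ray (linf_scale l x) <-> on_ray x.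
Proof.
move=> l_gt0; split=> -[m m_gt0 xE].
  exists (m / l); first by rewrite divr_gt0.
  move=> a; apply: (mulfI (lt0r_neq0 l_gt0)).
  by rewrite -[LHS]/(linf_scale l x a) xE mulrA mulrCA divff ?mulr1 ?lt0r_neq0.
by exists (l * m); [rewrite mulr_gt0 | move=> a; rewrite /= xE mulrA].
Qed.

Lemma ray_lift_on {x : linf A} :
  on_ray x -> ray_lift x = ray_coef x * \sum_(z <- zs) f z.
Proof. by rewrite /ray_lift; case: asboolP. Qed.

Lemma ray_lift_off {x : linf A} : ~ on_ray x -> ray_lift x = f x.
Proof. by rewrite /ray_lift; case: asboolP. Qed.

Lemma ray_lift_x0 : ray_lift x0 = \sum_(z <- zs) f z.
Proof.
have x0E a : x0 a = 1 * x0 a by rewrite mul1r.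
by rewrite ray_lift_on ?(ray_coefE x0E) ?mul1r //; exists 1.
Qed.

Lemma ray_lift_ge0 (x : linf A) : 0 <= ray_lift x.
Proof.
have [x_ray|x_off] := pselect (on_ray x); last by rewrite (ray_lift_off x_off).
have [c_gt0 _] := on_rayE x_ray; rewrite (ray_lift_on x_ray).
exact: mulr_ge0 (ltW c_gt0) (sumr_ge0 _ (fun z _ => f_ge0 z)).
Qed.

Lemma ray_lift_homogeneous : pos_homogeneous ray_lift.
Proof.
move=> l x l_gt0; have [x_ray|x_off] := pselect (on_ray x).
  have lx_ray : on_ray (linf_scale l x) by apply/on_ray_scale.
  by rewrite (ray_lift_on lx_ray) (ray_lift_on x_ray) /ray_coef /= !mulrA.
have lx_off : ~ on_ray (linf_scale l x) by move/(on_ray_scale l_gt0).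
by rewrite (ray_lift_off lx_off) (ray_lift_off x_off) f_hom.
Qed.

Lemma ray_lift_ge : f x0 <= \sum_(z <- zs) f z -> forall x, f x <= ray_lift x.
Proof.
move=> fx0_le x; have [x_ray|x_off] := pselect (on_ray x); last first.
  by rewrite (ray_lift_off x_off).
have [c_gt0 xE] := on_rayE x_ray.
by rewrite (ray_lift_on x_ray) {1}xE f_hom // (ler_wpM2l (ltW c_gt0)).
Qed.

Hypothesis zs_dom : forall a, \sum_(z <- zs) `|z a| <= `|x0 a|.

Definition ray_split (x : linf A) : seq (linf A) :=
  if `[< on_ray x >] then [seq linf_scale (ray_coef x) z | z <- zs] else [:: x].

Lemma ray_split_dom (x : linf A) (a : A) :
  \sum_(y <- ray_split x) `|y a| <= `|x a|.
Proof.
rewrite /ray_split; case: asboolP => [x_ray|_]; last by rewrite big_seq1.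
have [c_gt0 xE] := on_rayE x_ray; rewrite big_map {2}xE /= normrM gtr0_norm //.
under eq_bigr do rewrite /= normrM gtr0_norm //.
by rewrite -mulr_sumr (ler_wpM2l (ltW c_gt0)).
Qed.

Lemma ray_split_sum (x : linf A) :
  \sum_(y <- ray_split x) `|f y| = `|ray_lift x|.
Proof.
rewrite [RHS]ger0_norm ?ray_lift_ge0 // /ray_split /ray_lift.
case: asboolP => [x_ray|_]; last by rewrite big_seq1 ger0_norm.
have [c_gt0 _] := on_rayE x_ray; rewrite big_map mulr_sumr.
by apply: eq_bigr => z _; rewrite f_hom // ger0_norm // (mulr_ge0 (ltW c_gt0)).
Qed.

Lemma fbl_norm_ray_lift_le : (fbl_norm ray_lift <= fbl_norm f)%E.
Proof.
apply: ge_ereal_sup => _ [xs xs_adm <-].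
have := fbl_norm_ub f (flatten (map ray_split xs)).
rewrite big_flatten big_map; under eq_bigr do rewrite ray_split_sum.
apply=> a; apply: le_trans (xs_adm a).
by rewrite big_flatten big_map; apply: ler_sum => x _; apply: ray_split_dom.
Qed.

End RayLift.

Lemma maximal_sum_le {A : Type} (f : linf A -> R) (x0 : linf A) (zs : seq (linf A)) :
  maximal f -> (forall a, \sum_(z <- zs) `|z a| <= `|x0 a|) ->
  \sum_(z <- zs) f z <= f x0.
Proof.
move=> [[f_hom f_fin f_ge0] f_max] zs_dom.
have [[a0 x0a0_neq0]|x0_null] := pselect (exists a0, x0 a0 != 0); last first.
  have x0_eq0 a : x0 a = 0.
    by apply/eqP; apply: contra_notT x0_null => x0a_neq0; exists a.
  have -> : \sum_(z <- zs) f z = 0.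
    apply: pos_homogeneous_sum_null => // a.
    by have := zs_dom a; rewrite x0_eq0 normr0.
  exact: f_ge0.
case: leP => // fx0_lt.
pose g := ray_lift f x0 a0 zs.
have g_ge x : f x <= g x by apply: ray_lift_ge => //; apply: ltW.
have g_norm : fbl_norm g = fbl_norm f.
  apply/le_anti/andP; split; first exact: fbl_norm_ray_lift_le.
  by apply: fbl_norm_le => x; rewrite !ger0_norm ?ray_lift_ge0.
have g_H0 : H0_pos g.
  by split; rewrite ?g_norm //; [apply: ray_lift_homogeneous | apply: ray_lift_ge0].
have gx0 : g x0 = \sum_(z <- zs) f z by apply: ray_lift_x0.
by move: fx0_lt; rewrite -gx0 (f_max g g_H0 g_ge g_norm) ltxx.
Qed.

Lemma sum_normr_In {T : Type} (F : T -> R) (xs : seq T) :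
  (forall x, List.In x xs -> 0 <= F x) ->
  \sum_(x <- xs) `|F x| = \sum_(x <- xs) F x.
Proof.
elim: xs => [|x xs IH] xs_ge0; first by rewrite !big_nil.
rewrite !big_cons ger0_norm ?IH // => [y y_in|]; apply: xs_ge0; [right | left] => //.
Qed.

Lemma fbl_norm_le_sup_norm {A : Type} (f : linf A -> R) :
  maximal f -> (fbl_norm f <= sup_norm f)%E.
Proof.
move=> f_max; have [[_ _ f_ge0] _] := f_max.
apply: ge_ereal_sup => _ [xs xs_adm <-].
pose u := linf_sum (map linf_abs xs).
have uE a : `|u a| = \sum_(x <- xs) `|x a|.
  by rewrite /= big_map /= ger0_norm ?sumr_ge0.
apply: le_trans (_ : `|f u|%:E <= _)%E.
  rewrite lee_fin ger0_norm // sum_normr_In => [|x _]; last exact: f_ge0.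
  by apply: maximal_sum_le => // a; rewrite uE.
by apply: ereal_sup_ubound; exists u => // a; rewrite uE.
Qed.

Theorem lemma4p5 (A : Type) (HA : inhabited A) (f : linf A -> R) :
  maximal f ->
  [/\ (forall x y : linf A, (forall a, `|x a| <= `|y a|) -> f x <= f y),
      (forall xs : seq (linf A), (forall x, List.In x xs -> forall a, 0 <= x a) ->
         \sum_(x <- xs) f x <= f (linf_sum xs))
    & fbl_norm f = sup_norm f].
Proof.
move=> f_max; split.
- move=> x y le_xy; have := maximal_sum_le f y [:: x] f_max.
  by rewrite big_seq1; apply=> a; rewrite big_seq1.
- move=> xs xs_ge0; apply: maximal_sum_le => // a.
  rewrite /= sum_normr_In ?ler_norm // => x x_in.
  exact: xs_ge0.
- apply/le_anti; rewrite sup_norm_le_fbl_norm andbT.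
  exact: fbl_norm_le_sup_norm.
Qed.
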